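(* Let $A \in \mathbb{C}^{N\times N}$ and $\{\omega_j\}_{j\in\mathbb{N}}\subset\mathbb{C}\setminus\{0\}$. For $\iota\in\{1,2\}$ let $\{\mathcal{Q}^{(\iota)}_j\}_{j\in\mathbb{N}}$ and $\{\mathcal{P}^{(\iota)}_j\}_{j\in\mathbb{N}}$ be sequences of linear subspaces of $\mathbb{C}^N$ with $\mathcal{Q}^{(\iota)}_{j+1}\subseteq\mathcal{Q}^{(\iota)}_j$ and $\mathcal{P}^{(\iota)}_{j+1}\supseteq\mathcal{P}^{(\iota)}_j$ for all $j\in\mathbb{N}$, and suppose $\mathcal{Q}^{(1)}_j\subseteq\mathcal{Q}^{(2)}_j$ and $\mathcal{P}^{(1)}_j\supseteq\mathcal{P}^{(2)}_j$ for all $j\in\mathbb{N}$. Let $\mathcal{M}^{(\iota)}_j$, $j\in\mathbb{N}_0$, be the $\mathcal{M}$-spaces defined by $\mathcal{M}^{(\iota)}_0=\mathbb{C}^N$ and $$\mathcal{M}^{(\iota)}_j = (I-\omega_j A)\cdot\big(\mathcal{M}^{(\iota)}_{j-1}\cap(\mathcal{P}^{(\iota)}_j)^\perp\big) + \mathcal{Q}^{(\iota)}_j,\quad j\in\mathbb{N}.$$ Then $\mathcal{M}^{(\iota)}_{j+1}\subseteq\mathcal{M}^{(\iota)}_j$ for all $j\in\mathbb{N}_0$ and $\iota\in\{1,2\}$, and $\mathcal{M}^{(1)}_j\subseteq\mathcal{M}^{(2)}_j$ for all $j\in\mathbb{N}_0$.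
   Context: $(\cdot)^\perp$ denotes the orthogonal complement in $\mathbb{C}^N$ with respect to the standard Hermitian inner product, and $+$ denotes the sum of subspaces. The spaces $\mathcal{Q}_j$ are called add-spaces and the $\mathcal{P}_j$ cut-spaces. *)

From HB Require Import structures.
From mathcomp Require Import all_boot all_order all_algebra.
From mathcomp Require Import complex.
From mathcomp Require Import reals.
Set Implicit Arguments. Unset Strict Implicit. Unset Printing Implicit Defensive.
Import Order.TTheory GRing.Theory Num.Theory.
Local Open Scope ring_scope.
Local Open Scope complex_scope.

(* Vectors of C^N are row vectors 'rV[C]_N; a linear subspace of C^N is
   represented (mxalgebra style) by a square matrix 'M[C]_N whose row space
   is the subspace. *)

(* Orthogonal complement w.r.t. the standard Hermitian inner product
   <v,w> = \sum_i v_i (w_i)^* : v is orthogonal to every row of S iff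
   v *m (conj S)^T = 0. *)
Definition perpmx (C : numClosedFieldType) (N : nat) (S : 'M[C]_N) : 'M[C]_N :=
  kermx (map_mx Num.conj S)^T.

(* Image of the subspace S under the linear map x |-> B x (B acting on
   column vectors); in row-vector form, v |-> v *m B^T. *)
Definition imgmx (C : numClosedFieldType) (N : nat) (B S : 'M[C]_N) : 'M[C]_N :=
  (S *m B^T)%R.

Fixpoint Mspace (C : numClosedFieldType) (N : nat) (A : 'M[C]_N)
    (omega : nat -> C) (P Q : nat -> 'M[C]_N) (j : nat) : 'M[C]_N :=
  match j with
  | 0 => 1%:M
  | j'.+1 =>
      (imgmx (1%:M - omega j'.+1 *: A)
             (Mspace A omega P Q j' :&: perpmx (P j'.+1)) + Q j'.+1)%MS
  end.

From HB Require Import structures.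
From mathcomp Require Import all_boot all_order all_algebra.
From mathcomp Require Import complex.
From mathcomp Require Import reals.
Import Order.TTheory GRing.Theory Num.Theory.
Local Open Scope ring_scope.

(* Comparison is immediate since every
   operation in the recursion is monotone in its arguments (the complement
   being antitone).  For the decrease, write Y = M_{j+1} :&: P_{j+2}^perp;
   since I - w' A = (1 - w'/w) I + (w'/w) (I - w A) for w != 0, the image
   (I - omega_{j+2} A) Y lies in Y + (I - omega_{j+1} A) Y, and both summands
   lie in M_{j+1} by the induction hypothesis M_{j+1} <= M_j together with
   P_{j+1} <= P_{j+2}. *)

Section MspaceTheory.

Variables (C : numClosedFieldType) (N : nat).
Implicit Types (A B S T Y : 'M[C]_N) (P Q : nat -> 'M[C]_N).

Lemma MspaceS A omega P Q j :
  Mspace A omega P Q j.+1 =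
  (imgmx (1%:M - omega j.+1 *: A) (Mspace A omega P Q j :&: perpmx (P j.+1))
     + Q j.+1)%MS.
Proof. by []. Qed.

Lemma perpmxS S T : (S <= T)%MS -> (perpmx T <= perpmx S)%MS.
Proof.
move=> /submxP [D ->]; apply/sub_kermxP.
by rewrite map_mxM trmx_mul mulmxA mulmx_ker mul0mx.
Qed.

Lemma imgmxS B S T : (S <= T)%MS -> (imgmx B S <= imgmx B T)%MS.
Proof. exact: submxMr. Qed.

Lemma imgmx_shift_sub A Y (w w' : C) : w != 0 ->
  (imgmx (1%:M - w' *: A) Y <= Y + imgmx (1%:M - w *: A) Y)%MS.
Proof.
move=> w_neq0.
have shift : Y *m (1%:M - w' *: A)^T =
             (1 - w' / w) *: Y + (w' / w) *: (Y *m (1%:M - w *: A)^T).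
  have trE c : (1%:M - c *: A)^T = 1%:M - c *: A^T.
    by rewrite linearB /= linearZ /= trmx1.
  rewrite !trE !mulmxBr !mulmx1 -!scalemxAr.
  by rewrite scalerBr scalerA divfK // scalerBl scale1r addrA subrK.
by rewrite /imgmx shift addmx_sub_adds ?scalemx_sub.
Qed.

Lemma Mspace_sub A omega P1 Q1 P2 Q2 :
  (forall j, (0 < j)%N -> (Q1 j <= Q2 j)%MS) ->
  (forall j, (0 < j)%N -> (P2 j <= P1 j)%MS) ->
  forall j, (Mspace A omega P1 Q1 j <= Mspace A omega P2 Q2 j)%MS.
Proof.
move=> subQ subP; elim=> [|j IHj] //=.
by rewrite addsmxS ?subQ // imgmxS // capmxS // perpmxS ?subP.
Qed.

Lemma Mspace_decreasing A omega P Q :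
  (forall j, (0 < j)%N -> omega j != 0) ->
  (forall j, (0 < j)%N -> (Q j.+1 <= Q j)%MS) ->
  (forall j, (0 < j)%N -> (P j <= P j.+1)%MS) ->
  forall j, (Mspace A omega P Q j.+1 <= Mspace A omega P Q j)%MS.
Proof.
move=> omega_neq0 decQ incP; elim=> [|j IHj]; first exact: submx1.
rewrite [X in (X <= _)%MS]MspaceS addsmx_sub.
apply/andP; split; last by rewrite MspaceS (submx_trans (decQ j.+1 isT)) ?addsmxSr.
set Y := (_ :&: _)%MS.
have Y_sub : (Y <= Mspace A omega P Q j.+1)%MS by apply: capmxSl.
have imgY_sub : (imgmx (1%:M - omega j.+1 *: A) Y <= Mspace A omega P Q j.+1)%MS.
  rewrite MspaceS (submx_trans _ (addsmxSl _ _)) // imgmxS //.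
  by rewrite capmxS // perpmxS ?incP.
apply: submx_trans (imgmx_shift_sub A Y (omega j.+1) (omega j.+2) (omega_neq0 j.+1 isT)) _.
by rewrite addsmx_sub Y_sub.
Qed.

End MspaceTheory.

Theorem theorem1 (R : realType) (N : nat) (A : 'M[R[i]]_N)
    (omega : nat -> R[i])
    (Q1 P1 Q2 P2 : nat -> 'M[R[i]]_N) :
  (forall j, (0 < j)%N -> omega j != 0) ->
  (forall j, (0 < j)%N -> (Q1 j.+1 <= Q1 j)%MS) ->
  (forall j, (0 < j)%N -> (P1 j <= P1 j.+1)%MS) ->
  (forall j, (0 < j)%N -> (Q2 j.+1 <= Q2 j)%MS) ->
  (forall j, (0 < j)%N -> (P2 j <= P2 j.+1)%MS) ->
  (forall j, (0 < j)%N -> (Q1 j <= Q2 j)%MS) ->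
  (forall j, (0 < j)%N -> (P2 j <= P1 j)%MS) ->
  (forall j, (Mspace A omega P1 Q1 j.+1 <= Mspace A omega P1 Q1 j)%MS) /\
  (forall j, (Mspace A omega P2 Q2 j.+1 <= Mspace A omega P2 Q2 j)%MS) /\
  (forall j, (Mspace A omega P1 Q1 j <= Mspace A omega P2 Q2 j)%MS).
Proof.
move=> omega_neq0 decQ1 incP1 decQ2 incP2 subQ subP.
split; first exact: Mspace_decreasing.
split; first exact: Mspace_decreasing.
exact: Mspace_sub.
Qed.
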